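(* For each $q\in\mathbb{C}\setminus\{0\}$ and $n\in\mathbb{N}$, $\mathcal{O}_q(\mathbb{B}_\infty^n)=\mathcal{O}_q(\mathbb{D}_\infty^n)$ as subspaces of the space of formal series $\sum_{k\in\mathbb{Z}_+^n}c_kx^k$ and as Fréchet algebras.
   Context: $\mathcal{O}_q^{\mathrm{reg}}(\mathbb{C}^n)$: algebra generated by $x_1,\dots,x_n$ with $x_ix_j=qx_jx_i$ ($i<j$); basis $x^k=x_1^{k_1}\cdots x_n^{k_n}$, $k\in\mathbb{Z}_+^n$. Put $w_q(k)=1$ if $|q|\ge1$ and $w_q(k)=|q|^{\sum_{i<j}k_ik_j}$ if $|q|<1$; $u_q(k)=|q|^{\sum_{i<j}k_ik_j}$; $[m]_q=1+\dots+q^{m-1}$, $[m]_q!=[1]_q\cdots[m]_q$, $[0]_q!=1$, $[k]_q!=\prod_i[k_i]_q!$, $|k|=\sum k_i$. For $f=\sum_kc_kx^k$: $\|f\|_{\mathbb{D},\rho}=\sum_k|c_k|w_q(k)\rho^{|k|}$ and $\|f\|_{\mathbb{B},\rho}=\sum_k|c_k|\big([k]_{|q|^2}!/[|k|]_{|q|^2}!\big)^{1/2}u_q(k)\rho^{|k|}$. $\mathcal{O}_q(\mathbb{D}_\infty^n)$ (resp. $\mathcal{O}_q(\mathbb{B}_\infty^n)$) is the completion of $\mathcal{O}_q^{\mathrm{reg}}(\mathbb{C}^n)$ with respect to the norms $\|\cdot\|_{\mathbb{D},\rho}$ (resp. $\|\cdot\|_{\mathbb{B},\rho}$), $\rho\in(0,\infty)$,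 realized as formal series with all these norms finite. *)

From Stdlib Require Import Reals List.
Import ListNotations.
Open Scope R_scope.

Definition CC : Type := (R * R)%type.
Definition C0 : CC := (0, 0).
Definition Cmod (z : CC) : R := sqrt (fst z * fst z + snd z * snd z).

(* Multi-indices k in Z_+^n are lists of naturals of length n. *)
Definition mindex (n : nat) (k : list nat) : Prop := length k = n.

Definition mlen (k : list nat) : nat := fold_right Nat.add 0%nat k.

(* sum_{i<j} k_i k_j *)
Fixpoint cross (k : list nat) : nat :=
  match k with
  | [] => 0%nat
  | a :: k' => (a * mlen k' + cross k')%nat
  end.

Fixpoint qint (t : R) (m : nat) : R :=
  match m with
  | O => 0
  | S m' => qint t m' + t ^ m'
  end.

Fixpoint qfact (t : R) (m : nat) : R :=
  match m with
  | O => 1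
  | S m' => qfact t m' * qint t m
  end.

Definition qfactm (t : R) (k : list nat) : R :=
  fold_right (fun a acc => qfact t a * acc) 1 k.

Definition w_q (q : CC) (k : list nat) : R :=
  if Rle_dec 1 (Cmod q) then 1 else Cmod q ^ cross k.

Definition u_q (q : CC) (k : list nat) : R := Cmod q ^ cross k.

Definition wB (q : CC) (k : list nat) : R :=
  sqrt (qfactm (Cmod q ^ 2) k / qfact (Cmod q ^ 2) (mlen k)) * u_q q k.

(* A formal series sum_k c_k x^k is given by its coefficient function
   (only values on multi-indices of length n matter). *)
Definition fseries : Type := list nat -> CC.

Definition psum (wt : list nat -> R) (f : fseries) (rho : R) (L : list (list nat)) : R :=
  fold_right (fun k acc => Cmod (f k) * wt k * rho ^ (mlen k) + acc) 0 L.

(* The (possibly infinite) weighted norm sum_k |c_k| wt(k) rho^|k| is <= M: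
   every finite partial sum over distinct multi-indices in Z_+^n is <= M. *)
Definition wnorm_le (n : nat) (wt : list nat -> R) (f : fseries) (rho M : R) : Prop :=
  forall L : list (list nat), NoDup L -> Forall (mindex n) L -> psum wt f rho L <= M.

Definition normD_le (q : CC) (n : nat) (f : fseries) (rho M : R) : Prop :=
  wnorm_le n (w_q q) f rho M.
Definition normB_le (q : CC) (n : nat) (f : fseries) (rho M : R) : Prop :=
  wnorm_le n (wB q) f rho M.

Definition in_OD (q : CC) (n : nat) (f : fseries) : Prop :=
  forall rho, 0 < rho -> exists M, normD_le q n f rho M.
Definition in_OB (q : CC) (n : nat) (f : fseries) : Prop :=
  forall rho, 0 < rho -> exists M, normB_le q n f rho M.

(** The norms are equivalent because the weights are comparable up to a
    geometric factor: [wB q k <= w_q q k <= E ^ |k| * wB q k] for a constant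
    [E] depending only on [q] and [n], so that
    [||f||_{B,rho} <= ||f||_{D,rho} <= ||f||_{B,E rho}].
    With [s = |q|^2] the comparison reduces to estimates of
    [[|k|]_s! / [k]_s!], a product of q-binomial coefficients.  For [s >= 1]
    these are squeezed between [s^(sum_{i<j} k_i k_j)] and
    [2^(n|k|) s^(sum_{i<j} k_i k_j)] (q-Pascal rule); for [s < 1] between [1]
    and [(1 - s)^(-|k|)], since [1 <= [m]_s <= 1/(1-s)] for [m >= 1]. *)
From Stdlib Require Import Reals List Lra Lia Psatz.
Open Scope R_scope.

Section QFactorial.

Variable s : R.
Hypothesis s_ge0 : 0 <= s.

Lemma qint_ge0 m : 0 <= qint s m.
Proof. induction m; simpl; [lra|]. pose proof (pow_le s m s_ge0); lra. Qed.

Lemma qint_S_ge1 m : 1 <= qint s (S m).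
Proof.
induction m as [|m IH]; simpl in *; [lra|].
pose proof (pow_le s (S m) s_ge0); simpl in *; lra.
Qed.

Lemma qint_add a m : qint s (a + m) = qint s a + s ^ a * qint s m.
Proof.
induction m as [|m IH]; simpl; [rewrite Nat.add_0_r; ring|].
rewrite Nat.add_succ_r; simpl. rewrite IH, pow_add. ring.
Qed.

Lemma qint_le_add_l a m : qint s m <= qint s (a + m).
Proof.
rewrite Nat.add_comm, qint_add.
pose proof (qint_ge0 a); pose proof (pow_le s m s_ge0); nra.
Qed.

Lemma pow_qint_le_add a m : s ^ a * qint s m <= qint s (a + m).
Proof. rewrite qint_add. pose proof (qint_ge0 a); lra. Qed.

Lemma qint_le_inv_1_sub m : s < 1 -> qint s m <= 1 / (1 - s).
Proof.
intro s_lt1.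
assert (geom : qint s m * (1 - s) = 1 - s ^ m).
{ induction m as [|m IH]; simpl; [ring|]. rewrite Rmult_plus_distr_r, IH. ring. }
apply (Rmult_le_reg_r (1 - s)); [lra|].
unfold Rdiv; rewrite Rmult_1_l, Rinv_l by lra.
pose proof (pow_le s m s_ge0); lra.
Qed.

Lemma qfact_ge1 m : 1 <= qfact s m.
Proof. induction m; simpl; [lra|]. pose proof (qint_S_ge1 m); simpl in *; nra. Qed.

Lemma qfact_le_pow m : s < 1 -> qfact s m <= (1 / (1 - s)) ^ m.
Proof.
intro s_lt1; induction m as [|m IH]; simpl; [lra|].
pose proof (qint_le_inv_1_sub (S m) s_lt1); pose proof (qfact_ge1 m).
pose proof (qint_S_ge1 m); simpl in *; nra.
Qed.

Lemma pow_qfact_mul_le_add a m c : 0 <= c ->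
  (forall j, c * qint s j <= qint s (a + j)) ->
  c ^ m * qfact s a * qfact s m <= qfact s (a + m).
Proof.
intros c_ge0 step; induction m as [|m IH]; simpl; [rewrite Nat.add_0_r; lra|].
rewrite Nat.add_succ_r; simpl.
pose proof (step (S m)) as step_m; rewrite Nat.add_succ_r in step_m.
pose proof (qint_S_ge1 m); simpl in *.
pose proof (pow_le c m c_ge0); pose proof (qfact_ge1 a); pose proof (qfact_ge1 m).
replace (c * c ^ m * qfact s a * (qfact s m * (qint s m + s ^ m)))
  with ((c ^ m * qfact s a * qfact s m) * (c * (qint s m + s ^ m))) by ring.
apply Rmult_le_compat; [repeat apply Rmult_le_pos; lra | nra | exact IH | exact step_m].
Qed.

Lemma qfactm_ge1 k : 1 <= qfactm s k.
Proof. induction k as [|a k IH]; simpl; [lra|]. pose proof (qfact_ge1 a); nra. Qed.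

Lemma qfactm_le_qfact k : qfactm s k <= qfact s (mlen k).
Proof.
induction k as [|a k IH]; simpl; [lra|].
assert (step : forall j, 1 * qint s j <= qint s (a + j))
  by (intro j; rewrite Rmult_1_l; apply qint_le_add_l).
pose proof (pow_qfact_mul_le_add a (mlen k) 1 ltac:(lra) step) as super.
rewrite pow1, Rmult_1_l in super.
pose proof (qfact_ge1 a); fold (mlen k); nra.
Qed.

Lemma pow_cross_qfactm_le_qfact k : s ^ cross k * qfactm s k <= qfact s (mlen k).
Proof.
induction k as [|a k IH]; simpl; [lra|].
pose proof (pow_qfact_mul_le_add a (mlen k) (s ^ a) (pow_le s a s_ge0)
  (pow_qint_le_add a)) as super.
rewrite <- pow_mult in super.
pose proof (qfact_ge1 a); pose proof (pow_le s (a * mlen k) s_ge0).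
fold (mlen k); rewrite pow_add.
replace (s ^ (a * mlen k) * s ^ cross k * (qfact s a * qfactm s k))
  with (s ^ (a * mlen k) * qfact s a * (s ^ cross k * qfactm s k)) by ring.
eapply Rle_trans; [|exact super].
apply Rmult_le_compat_l; [nra | exact IH].
Qed.

Hypothesis s_ge1 : 1 <= s.

(* q-Pascal: [a+1+m+1]_s = [a+1]_s + s^(a+1) [m+1]_s splits [a+m+2]_s! into
   two terms, each bounded by the induction hypothesis by half the claim. *)
Lemma qfact_add_le a m :
  qfact s (a + m) <= 2 ^ (a + m) * s ^ (a * m) * qfact s a * qfact s m.
Proof.
enough (by_size : forall N a m, (a + m = N)%nat ->
  qfact s (a + m) <= 2 ^ (a + m) * s ^ (a * m) * qfact s a * qfact s m)
  by exact (by_size _ a m eq_refl).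
clear a m; intro N; induction N as [|N IH]; intros a m HN.
{ assert (a = 0%nat) by lia; assert (m = 0%nat) by lia; subst; simpl; lra. }
assert (two_pow_ge1 : forall p, 1 <= 2 ^ p) by (intro; apply pow_R1_Rle; lra).
destruct a as [|a].
{ simpl. pose proof (two_pow_ge1 m); pose proof (qfact_ge1 m); nra. }
destruct m as [|m].
{ rewrite Nat.add_0_r, Nat.mul_0_r; simpl.
  pose proof (two_pow_ge1 (S a)); pose proof (qfact_ge1 (S a)); simpl in *; nra. }
assert (pascal : qfact s (S a + S m)
  = qfact s (a + S m) * qint s (S a) + s ^ S a * (qfact s (S a + m) * qint s (S m))).
{ replace (S a + S m)%nat with (S (a + S m)) by lia.
  replace (S a + m)%nat with (a + S m)%nat by lia.
  change (qfact s (S (a + S m))) with (qfact s (a + S m) * qint s (S (a + S m))).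
  replace (S (a + S m)) with (S a + S m)%nat by lia. rewrite qint_add. ring. }
pose proof (IH a (S m) ltac:(lia)) as left_term.
pose proof (IH (S a) m ltac:(lia)) as right_term.
assert (size_left : (a + S m)%nat = N) by lia.
assert (size_right : (S a + m)%nat = N) by lia.
rewrite size_left in left_term, pascal; rewrite size_right in right_term, pascal.
rewrite pascal, HN.
change (qfact s (S a)) with (qfact s a * qint s (S a)) in *.
change (qfact s (S m)) with (qfact s m * qint s (S m)) in *.
assert (exp_le : s ^ (a * S m) <= s ^ (S a * S m)) by (apply Rle_pow; [lra | nia]).
assert (exp_eq : s ^ S a * s ^ (S a * m) = s ^ (S a * S m))
  by (rewrite <- pow_add; f_equal; lia).
pose proof (qfact_ge1 a); pose proof (qfact_ge1 m).
pose proof (qint_S_ge1 a); pose proof (qint_S_ge1 m).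
pose proof (pow_le s (S a) s_ge0); pose proof (pow_le s (a * S m) s_ge0).
pose proof (pow_le 2 N ltac:(lra)).
set (Fa := qfact s a) in *; set (Fm := qfact s m) in *.
set (Ia := qint s (S a)) in *; set (Im := qint s (S m)) in *.
set (P := 2 ^ N) in *.
change (2 ^ S N) with (2 * P).
assert (bound_left : qfact s N * Ia <= P * s ^ (S a * S m) * (Fa * Ia) * (Fm * Im)).
{ apply Rle_trans with (P * s ^ (a * S m) * Fa * (Fm * Im) * Ia); [nra|].
  assert (0 <= P * (Fa * Ia) * (Fm * Im)) by (repeat apply Rmult_le_pos; lra). nra. }
assert (bound_right : s ^ S a * (qfact s N * Im)
  <= P * s ^ (S a * S m) * (Fa * Ia) * (Fm * Im)).
{ rewrite <- exp_eq.
  replace (P * (s ^ S a * s ^ (S a * m)) * (Fa * Ia) * (Fm * Im))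
    with (s ^ S a * ((P * s ^ (S a * m) * (Fa * Ia) * Fm) * Im)) by ring.
  apply Rmult_le_compat_l; [lra|]. apply Rmult_le_compat_r; lra. }
lra.
Qed.

Lemma qfact_le_qfactm k :
  qfact s (mlen k) <= (2 ^ length k) ^ mlen k * s ^ cross k * qfactm s k.
Proof.
induction k as [|a k IH]; simpl; [lra|].
fold (mlen k); set (m := mlen k) in *.
pose proof (qfact_add_le a m) as split_head.
pose proof (qfact_ge1 a); pose proof (qfactm_ge1 k).
pose proof (pow_le s (a * m) s_ge0); pose proof (pow_le s (cross k) s_ge0).
pose proof (pow_le 2 (a + m) ltac:(lra)).
assert (1 <= 2 ^ length k) by (apply pow_R1_Rle; lra).
assert ((2 ^ length k) ^ m <= (2 ^ length k) ^ (a + m)) by (apply Rle_pow; [lra | lia]).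
eapply Rle_trans; [exact split_head|].
apply Rle_trans with (2 ^ (a + m) * s ^ (a * m) * qfact s a
  * ((2 ^ length k) ^ (a + m) * s ^ cross k * qfactm s k)).
- apply Rmult_le_compat_l; [repeat apply Rmult_le_pos; lra|].
  eapply Rle_trans; [exact IH|]. apply Rmult_le_compat_r; [lra|].
  apply Rmult_le_compat_r; lra.
- rewrite (pow_add s), (Rpow_mult_distr 2). right; ring.
Qed.

End QFactorial.

Lemma sqrt_ratio_bounds Q F K : 0 < Q -> Q <= F -> F <= K * Q ->
  sqrt (Q / F) <= 1 /\ 1 <= K * sqrt (Q / F).
Proof.
intros Q_gt0 Q_le_F F_le.
assert (ratio_le1 : Q / F <= 1)
  by (apply (Rmult_le_reg_r F); [lra|]; unfold Rdiv; rewrite Rmult_assoc, Rinv_l; lra).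
assert (ratio_ge0 : 0 <= Q / F) by (apply Rlt_le, Rdiv_lt_0_compat; lra).
assert (one_le : 1 <= K * (Q / F))
  by (apply (Rmult_le_reg_r F); [lra|]; unfold Rdiv;
      rewrite Rmult_1_l, !Rmult_assoc, Rinv_l; lra).
assert (sqrt_le1 : sqrt (Q / F) <= 1) by (rewrite <- sqrt_1; apply sqrt_le_1_alt; lra).
assert (sqrt_sq : sqrt (Q / F) * sqrt (Q / F) = Q / F) by (apply sqrt_sqrt; lra).
pose proof (sqrt_pos (Q / F)).
assert (ratio_le_sqrt : Q / F <= sqrt (Q / F)) by nra.
assert (0 <= K) by nra.
split; [exact sqrt_le1 | nra].
Qed.

Lemma wB_le_w_q_le_pow (q : CC) (n : nat) : exists E, 1 <= E /\
  forall k, length k = n -> wB q k <= w_q q k /\ w_q q k <= E ^ mlen k * wB q k.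
Proof.
set (t := Cmod q); assert (t_ge0 : 0 <= t) by apply sqrt_pos.
set (s := t ^ 2); assert (s_ge0 : 0 <= s) by (apply pow_le; lra).
unfold wB, w_q, u_q; fold t s.
destruct (Rle_dec 1 t) as [t_ge1 | t_lt1].
- exists (2 ^ n); split; [apply pow_R1_Rle; lra|]; intros k k_len.
  assert (s_ge1 : 1 <= s) by (unfold s; nra).
  assert (sqrt_s_pow : sqrt (s ^ cross k) = t ^ cross k).
  { unfold s; rewrite <- pow_mult, Nat.mul_comm, pow_mult.
    apply sqrt_pow2, pow_le; lra. }
  assert (wB_eq : sqrt (qfactm s k / qfact s (mlen k)) * t ^ cross k
    = sqrt (s ^ cross k * qfactm s k / qfact s (mlen k))).
  { rewrite <- sqrt_s_pow, Rmult_comm, <- sqrt_mult_alt by (apply pow_le; lra).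
    f_equal; unfold Rdiv; ring. }
  rewrite wB_eq.
  pose proof (qfactm_ge1 s s_ge0 k); pose proof (pow_R1_Rle s (cross k) s_ge1).
  pose proof (qfact_le_qfactm s s_ge0 s_ge1 k) as upper; rewrite k_len in upper.
  apply sqrt_ratio_bounds; [nra | apply pow_cross_qfactm_le_qfact; lra |].
  rewrite <- Rmult_assoc; exact upper.
- exists (1 / (1 - s)).
  assert (s_lt1 : s < 1) by (unfold s; nra).
  assert (E_ge1 : 1 <= 1 / (1 - s)).
  { apply (Rmult_le_reg_r (1 - s)); [lra|].
    unfold Rdiv; rewrite Rmult_assoc, Rinv_l by lra; lra. }
  split; [exact E_ge1|]; intros k _.
  pose proof (qfactm_ge1 s s_ge0 k).
  pose proof (pow_le (1 / (1 - s)) (mlen k) ltac:(lra)).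
  destruct (sqrt_ratio_bounds (qfactm s k) (qfact s (mlen k)) ((1 / (1 - s)) ^ mlen k))
    as [ratio_le1 one_le]; [lra | apply qfactm_le_qfact; lra | |].
  { pose proof (qfact_le_pow s s_ge0 (mlen k) s_lt1); nra. }
  pose proof (pow_le t (cross k) t_ge0).
  split; nra.
Qed.

Lemma wnorm_le_mono n (w1 w2 : list nat -> R) f r1 r2 M :
  (forall k, length k = n -> w1 k * r1 ^ mlen k <= w2 k * r2 ^ mlen k) ->
  wnorm_le n w2 f r2 M -> wnorm_le n w1 f r1 M.
Proof.
intros weight_le bound L L_nodup L_idx.
eapply Rle_trans; [|exact (bound L L_nodup L_idx)].
clear L_nodup bound; induction L_idx as [|k L k_idx _ IH]; simpl; [lra|].
pose proof (sqrt_pos (fst (f k) * fst (f k) + snd (f k) * snd (f k))).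
pose proof (weight_le k k_idx); unfold Cmod in *.
rewrite !Rmult_assoc. apply Rplus_le_compat; [apply Rmult_le_compat_l|]; lra.
Qed.

Lemma normD_le_normB q n f rho M : 0 <= rho ->
  normD_le q n f rho M -> normB_le q n f rho M.
Proof.
intro rho_ge0; destruct (wB_le_w_q_le_pow q n) as [E [_ weights]].
apply wnorm_le_mono; intros k k_len.
apply Rmult_le_compat_r; [apply pow_le; lra | apply weights, k_len].
Qed.

Lemma normB_le_normD q n : exists E, 1 <= E /\ forall f rho M, 0 <= rho ->
  normB_le q n f (rho * E) M -> normD_le q n f rho M.
Proof.
destruct (wB_le_w_q_le_pow q n) as [E [E_ge1 weights]].
exists E; split; [exact E_ge1|]; intros f rho M rho_ge0.
apply wnorm_le_mono; intros k k_len.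
rewrite Rpow_mult_distr.
replace (wB q k * (rho ^ mlen k * E ^ mlen k))
  with (E ^ mlen k * wB q k * rho ^ mlen k) by ring.
apply Rmult_le_compat_r; [apply pow_le; lra | apply weights, k_len].
Qed.

Theorem corollary4p3 (q : CC) (n : nat) (hq : q <> C0) :
  (forall f : fseries, in_OB q n f <-> in_OD q n f) /\
  (forall rho, 0 < rho -> exists rho' Cst, 0 < rho' /\ 0 < Cst /\
     forall (f : fseries) (M : R), normD_le q n f rho' M -> normB_le q n f rho (Cst * M)) /\
  (forall rho, 0 < rho -> exists rho' Cst, 0 < rho' /\ 0 < Cst /\
     forall (f : fseries) (M : R), normB_le q n f rho' M -> normD_le q n f rho (Cst * M)).
Proof.
destruct (normB_le_normD q n) as [E [E_ge1 BD]].
split; [|split].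
- intro f; split; intros bounded rho rho_gt0.
  + destruct (bounded (rho * E) ltac:(nra)) as [M HM].
    exists M; apply BD; [lra | exact HM].
  + destruct (bounded rho rho_gt0) as [M HM].
    exists M; apply normD_le_normB; [lra | exact HM].
- intros rho rho_gt0; exists rho, 1; repeat split; [lra | lra |].
  intros f M HM; rewrite Rmult_1_l; apply normD_le_normB; [lra | exact HM].
- intros rho rho_gt0; exists (rho * E), 1; repeat split; [nra | lra |].
  intros f M HM; rewrite Rmult_1_l; apply BD; [lra | exact HM].
Qed.
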